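(* Let $n$ be odd. Let $\theta\sim\mathsf{Bernoulli}(p)$ with $p\in[\frac12,1)$ and, conditionally on $\theta$, let $Y_1,\dots,Y_n$ be i.i.d. with $\Pr(Y_k=1|\theta=1)=\bar\alpha$ and $\Pr(Y_k=1|\theta=0)=\alpha$, where $\alpha\in(0,\frac12)$, $\bar\alpha\bar p>\alpha p$, and $p<\mathsf{P}_{\mathsf{c}}(\theta|Y^n)$. Let $$\zeta_n(\varepsilon)=\frac{\mathsf{P}_{\mathsf{c}}(\theta|Y^n)-\varepsilon^n}{p\bar\alpha^n-\bar p\alpha^n}.$$ Then there exists $\varepsilon_{\mathsf L}<\mathsf{P}_{\mathsf{c}}^{1/n}(\theta|Y^n)$ such that for every $\varepsilon\in[\varepsilon_{\mathsf L},\mathsf{P}_{\mathsf{c}}^{1/n}(\theta|Y^n)]$, $$\max_{P_{Z^n|Y^n}:\ \mathcal{Z}^n=\{0,1\}^n,\ \mathsf{P}_{\mathsf{c}}(\theta|Z^n)\le\varepsilon^n}\mathsf{P}_{\mathsf{c}}(Y^n|Z^n)=1-\zeta_n(\varepsilon)\,(p\bar\alpha^n+\bar p\alpha^n),$$ and the $2^n$-ary Z-channel $\mathsf{Z}_n(\zeta_n(\varepsilon))$ attains this maximum on this interval.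
   Context: $\bar a=1-a$. $\mathsf{P}_{\mathsf{c}}(\theta|Z^n)=\sum_{z^n}\max_{t}P_{\theta Z^n}(t,z^n)$, and similarly for $\mathsf{P}_{\mathsf{c}}(Y^n|Z^n)$, $\mathsf{P}_{\mathsf{c}}(\theta|Y^n)$. The maximum is over channels $P_{Z^n|Y^n}$ with output alphabet $\{0,1\}^n$ acting on $Y^n$ only (so $\theta - Y^n - Z^n$ is a Markov chain). The $2^n$-ary Z-channel $\mathsf{Z}_n(\gamma)$ on $\{0,1\}^n$ is given by $\mathsf{W}(y|y)=1$ for $y\ne\mathbf 1$, $\mathsf{W}(\mathbf 0|\mathbf 1)=\gamma$, $\mathsf{W}(\mathbf 1|\mathbf 1)=1-\gamma$, with $\mathbf 0=(0,\dots,0)$, $\mathbf 1=(1,\dots,1)$. *)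

From HB Require Import structures.
From mathcomp Require Import all_boot all_order all_algebra.
From mathcomp Require Import all_classical all_reals.
From mathcomp Require Import exp.
Set Implicit Arguments. Unset Strict Implicit. Unset Printing Implicit Defensive.
Import Order.TTheory GRing.Theory Num.Theory.
Local Open Scope ring_scope.

Section Defs.
Variable R : realType.
Variable n : nat.

Definition word := {ffun 'I_n -> bool}.
Definition zeros : word := [ffun => false].
Definition ones : word := [ffun => true].

Definition channel := word -> word -> R.
Definition is_channel (K : channel) : Prop :=
  (forall y z, 0 <= K y z) /\ (forall y, \sum_(z : word) K y z = 1).

Definition bern (b : bool) (q : R) : R := if b then q else 1 - q.

Variables (p alpha : R).

Definition P_thY (t : bool) (y : word) : R :=
  bern t p * \prod_(k < n) bern (y k) (if t then 1 - alpha else alpha).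

Definition P_Y (y : word) : R := \sum_(t : bool) P_thY t y.

Definition P_thZ (K : channel) (t : bool) (z : word) : R :=
  \sum_(y : word) P_thY t y * K y z.

Definition P_YZ (K : channel) (y z : word) : R := P_Y y * K y z.

Definition Pc_thY : R := \sum_(y : word) \big[Num.max/0]_(t : bool) P_thY t y.
Definition Pc_thZ (K : channel) : R :=
  \sum_(z : word) \big[Num.max/0]_(t : bool) P_thZ K t z.
Definition Pc_YZ (K : channel) : R :=
  \sum_(z : word) \big[Num.max/0]_(y : word) P_YZ K y z.

Definition zeta (eps : R) : R :=
  (Pc_thY - eps ^+ n) / (p * (1 - alpha) ^+ n - (1 - p) * alpha ^+ n).

End Defs.

Definition Zchan (R : realType) (n : nat) (gamma : R) : channel R n :=
  fun y z =>
    if y != ones n then (if z == y then 1 else 0)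
    else if z == zeros n then gamma
    else if z == ones n then 1 - gamma
    else 0.

From HB Require Import structures.
From mathcomp Require Import all_boot all_order all_algebra.
From mathcomp Require Import all_classical all_reals.
From mathcomp Require Import exp.
From mathcomp Require Import ring lra.
Import Order.TTheory GRing.Theory Num.Theory.
Set Implicit Arguments. Unset Strict Implicit. Unset Printing Implicit Defensive.
Local Open Scope ring_scope.

(* Write A = p(1-alpha)^n and B = (1-p)alpha^n for the probabilities of (theta, Y^n) = (1, 1...1)
   and (0, 1...1), and C = (1-p)(1-alpha)^n, D = p alpha^n for (0, 0...0) and (1, 0...0).
   Since p >= 1/2 >= alpha, every y satisfies B P(theta, y) <= A P(~theta, y). At each output z
   of a channel, compare the MAP guess of theta with the guess of theta at the most likely input:
   this bound turns every unit of P_c(theta|Z) lost below P_c(theta|Y) into a loss of at least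
   (A+B)/(A-B) in P_c(Y|Z), i.e. (A+B)(P_c(theta|Y) - P_c(theta|Z)) <= (A-B)(1 - P_c(Y|Z)).
   The Z-channel Z_n(g) attains this with equality as long as g(A-B) <= C-D, which keeps the
   MAP guess at 0...0 equal to 0 (this is where alpha p < (1-alpha)(1-p), i.e. D < C, is used);
   g = zeta_n(eps) makes P_c(theta|Z) = eps^n, and eps^n ranges over a left neighbourhood of
   P_c(theta|Y) as eps ranges over [eps_L, P_c(theta|Y)^(1/n)]. *)

Lemma bigmax_bool (R : realDomainType) (F : bool -> R) : 0 <= F false ->
  \big[Num.max/0]_(t : bool) F t = Num.max (F true) (F false).
Proof. by move=> F0; rewrite /index_enum !unlock /= (max_idPl F0). Qed.

Lemma ltr_mul_exprn (R : realDomainType) (a b x y : R) (n : nat) : (0 < n)%N ->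
  0 <= a -> 0 <= x <= y -> a * x < b * y -> a * x ^+ n < b * y ^+ n.
Proof.
case: n => // m _ a_ge0 /andP[x_ge0 x_le_y] axby; rewrite !exprS !mulrA.
have y_gt0 : 0 < y.
  rewrite lt_def (le_trans x_ge0 x_le_y) andbT; apply: contraTneq axby => y0.
  have x0 : x = 0 by apply/le_anti; rewrite x_ge0 -y0 x_le_y.
  by rewrite x0 y0 !mulr0 ltxx.
have xy_m : x ^+ m <= y ^+ m by rewrite lerXn2r // nnegrE (le_trans x_ge0).
apply: (le_lt_trans (ler_wpM2l (mulr_ge0 a_ge0 x_ge0) xy_m)).
by rewrite ltr_pM2r // exprn_gt0.
Qed.

Section NthRoot.
Variables (R : realType) (n : nat).
Hypothesis n_gt0 : (0 < n)%N.

Lemma powR_invnK (x : R) : 0 <= x -> (x `^ n%:R^-1) ^+ n = x.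
Proof.
move=> x_ge0; rewrite -powR_mulrn ?powR_ge0 // -powRrM mulVf ?powRr1 //.
by rewrite pnatr_eq0 -lt0n.
Qed.

Lemma powR_invn_ge (x e : R) : 0 <= x -> 0 <= e ->
  (e <= x `^ n%:R^-1) = (e ^+ n <= x).
Proof.
by move=> x_ge0 e_ge0; rewrite -(ler_pXn2r n_gt0) ?nnegrE ?powR_ge0 ?powR_invnK.
Qed.

Lemma powR_invn_le (x e : R) : 0 <= x -> 0 <= e ->
  (x `^ n%:R^-1 <= e) = (x <= e ^+ n).
Proof.
by move=> x_ge0 e_ge0; rewrite -(ler_pXn2r n_gt0) ?nnegrE ?powR_ge0 ?powR_invnK.
Qed.

End NthRoot.

Section MAPGap.
Variables (R : realDomainType) (T : finType) (P : bool -> T -> R) (A B : R).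
Hypothesis P_ge0 : forall t y, 0 <= P t y.
Hypothesis P_bias : forall t y, B * P t y <= A * P (~~ t) y.

Lemma MAP_gap_le t y :
  (A + B) * (\big[Num.max/0]_(s : bool) P s y - P t y) <= (A - B) * \sum_(s : bool) P s y.
Proof.
rewrite bigmax_bool // big_bool /=.
have := P_bias true y; have := P_bias false y; have := P_ge0 true y; have := P_ge0 false y.
rewrite /=; case: t; move: (P true y) (P false y) => x1 x0 x0_ge0 x1_ge0 bias0 bias1;
  by rewrite maxEle; case: (leP x1 x0) => ?; nra.
Qed.

Lemma MAP_gap_weighted_le (a : T -> R) : 0 <= A + B -> (forall y, 0 <= a y) ->
  (A + B) * (\sum_y (\big[Num.max/0]_(s : bool) P s y) * a y
             - \big[Num.max/0]_(t : bool) \sum_y P t y * a y)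
  <= (A - B) * (\sum_y (\sum_(s : bool) P s y) * a y
                - \big[Num.max/0]_y ((\sum_(s : bool) P s y) * a y)).
Proof.
move=> AB_ge0 a_ge0.
have [y0 _|T0] := pickP (xpredT : pred T); last first.
  rewrite !(big_pred0 _ _ _ _ T0) subrr mulr0 sub0r mulrN oppr_le0.
  by rewrite mulr_ge0 // bigmax_ge_id.
(* Guess theta by its MAP value ts at the most likely input ys: the ys-terms then cancel. *)
pose Q y := (\sum_(s : bool) P s y) * a y.
have Q_ge0 y : 0 <= Q y by rewrite mulr_ge0 ?sumr_ge0.
have [ys _ maxQ] := @eq_bigmax _ _ _ 0 y0 xpredT Q isT (fun y _ => Q_ge0 y).
have [ts _ maxP] := @eq_bigmax _ _ _ 0 true xpredT (P^~ ys) isT (fun s _ => P_ge0 s ys).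
rewrite maxQ; apply: (@le_trans _ _
  ((A + B) * (\sum_y (\big[Num.max/0]_(s : bool) P s y) * a y - \sum_y P ts y * a y))).
  by rewrite ler_wpM2l // lerB //; apply: le_bigmax.
rewrite -sumrB mulr_sumr (bigD1 ys) //= maxP subrr mulr0 add0r.
rewrite [X in _ <= _ * (X - _)](bigD1 ys) //= addrAC subrr add0r mulr_sumr.
apply: ler_sum => y _; rewrite -mulrBl mulrA [leRHS]mulrA ler_wpM2r //.
exact: MAP_gap_le.
Qed.

End MAPGap.

Section ZChannel.
Variables (R : realType) (n : nat) (g : R).
Hypothesis n_gt0 : (0 < n)%N.

Lemma zeros_neq_ones : zeros n != ones n.
Proof. by apply/eqP => /ffunP/(_ (Ordinal n_gt0)); rewrite !ffunE. Qed.

Lemma sum_ones_zeros (F : word n -> R) :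
  \sum_z F z = F (ones n) + F (zeros n)
                + \sum_(z | (z != ones n) && (z != zeros n)) F z.
Proof.
by rewrite (bigD1 (ones n)) //= (bigD1 (zeros n)) ?zeros_neq_ones //= addrA.
Qed.

Lemma sum_Zchan (F : word n -> R) z :
  \sum_y F y * Zchan g y z =
  if z == ones n then (1 - g) * F (ones n)
  else if z == zeros n then F (zeros n) + g * F (ones n) else F z.
Proof.
have others : \sum_(y | y != ones n) F y * Zchan g y z = if z == ones n then 0 else F z.
  case: eqP => [->|/eqP z_ne1].
    by apply: big1 => y y_ne1; rewrite /Zchan y_ne1 eq_sym (negbTE y_ne1) mulr0.
  rewrite (bigD1 z) //= big1 => [|y /andP[y_ne1 y_nez]].
    by rewrite /Zchan z_ne1 eqxx mulr1 addr0.
  by rewrite /Zchan y_ne1 eq_sym (negbTE y_nez) mulr0.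
rewrite (bigD1 (ones n)) //= others /Zchan eqxx /=.
case: (eqVneq z (ones n)) => [->|_].
  by rewrite eq_sym (negbTE zeros_neq_ones) addr0 mulrC.
by case: eqP => [->|_]; rewrite ?mulr0 ?add0r // addrC mulrC.
Qed.

Lemma Zchan_is_channel : 0 <= g -> g <= 1 -> is_channel (@Zchan R n g).
Proof.
move=> g_ge0 g_le1; split=> [y z|y]; first by rewrite /Zchan; repeat case: ifP => _; lra.
case: (eqVneq y (ones n)) => [->|y_ne1].
  rewrite sum_ones_zeros big1 => [|z /andP[z_ne1 z_ne0]].
    by rewrite /Zchan eqxx /= eq_sym (negbTE zeros_neq_ones) eqxx addr0 subrK.
  by rewrite /Zchan eqxx /= (negbTE z_ne1) (negbTE z_ne0).
rewrite (bigD1 y) //= big1 => [|z z_ne]; first by rewrite /Zchan y_ne1 eqxx addr0.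
by rewrite /Zchan y_ne1 (negbTE z_ne).
Qed.

End ZChannel.

Section BinaryObservations.
Variables (R : realType) (n : nat) (p alpha : R).

Local Notation A := (p * (1 - alpha) ^+ n).
Local Notation B := ((1 - p) * alpha ^+ n).
Local Notation C := ((1 - p) * (1 - alpha) ^+ n).
Local Notation D := (p * alpha ^+ n).
Local Notation P_thY := (@P_thY R n p alpha).
Local Notation P_Y := (@P_Y R n p alpha).

Lemma sum_prod_bern (q : R) : \sum_(y : word n) \prod_(k < n) bern (y k) q = 1.
Proof.
rewrite /word -(bigA_distr_bigA (fun (k : 'I_n) (b : bool) => bern b q)) /=.
by apply: big1 => k _; rewrite big_bool /= addrC subrK.
Qed.

Lemma sum_P_Y : \sum_(y : word n) P_Y y = 1.
Proof.
rewrite /P_Y exchange_big big_bool /= /P_thY -!big_distrr /= !sum_prod_bern.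
by rewrite !mulr1 addrC subrK.
Qed.

Lemma P_thY_ones t :
  P_thY t (ones n) = bern t p * (if t then 1 - alpha else alpha) ^+ n.
Proof.
by rewrite /P_thY; under eq_bigr do rewrite ffunE; rewrite prodr_const card_ord.
Qed.

Lemma P_thY_zeros t :
  P_thY t (zeros n) = bern t p * (if t then alpha else 1 - alpha) ^+ n.
Proof.
rewrite /P_thY; under eq_bigr do rewrite ffunE; rewrite prodr_const card_ord /=.
by case: t; rewrite // opprB addrC subrK.
Qed.

Lemma bern_ge0 b (q : R) : 0 <= q -> q <= 1 -> 0 <= bern b q.
Proof. by case: b => /= *; lra. Qed.

Lemma P_thY_ge0 t y : 0 <= p <= 1 -> 0 <= alpha <= 1 -> 0 <= P_thY t y.
Proof.
move=> /andP[p_ge0 p_le1] /andP[alpha_ge0 alpha_le1].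
rewrite /P_thY mulr_ge0 ?prodr_ge0 ?bern_ge0 // => k _.
by rewrite bern_ge0 //; case: t => /=; lra.
Qed.

Lemma P_thY_bias t y : 1 - p <= p <= 1 -> 0 <= alpha <= 1 - alpha ->
  B * P_thY t y <= A * P_thY (~~ t) y.
Proof.
move=> /andP[p_compl_le p_le1] /andP[alpha_ge0 alpha_le_compl].
pose q t := if t then 1 - alpha else alpha.
have q_ge0 s : 0 <= q s by case: s => /=; lra.
have q_le1 s : q s <= 1 by case: s => /=; lra.
have prodXn (x : R) (F : 'I_n -> R) :
  x ^+ n * \prod_(k < n) F k = \prod_(k < n) (x * F k).
  by rewrite big_split /= prodr_const card_ord.
have prior : (1 - p) * bern t p <= p * bern (~~ t) p by case: t => /=; nra.
have likelihood : alpha ^+ n * \prod_(k < n) bern (y k) (q t)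
                  <= (1 - alpha) ^+ n * \prod_(k < n) bern (y k) (q (~~ t)).
  rewrite !prodXn; apply: ler_prod => k _.
  by rewrite /q; case: (y k) {prior}; case: t => /=; nra.
rewrite /P_thY -/(q t) -/(q (~~ t)) mulrACA [leRHS]mulrACA.
rewrite ler_pM // mulr_ge0 ?exprn_ge0 ?bern_ge0 //; try lra.
by apply: prodr_ge0 => k _; apply: bern_ge0.
Qed.

Lemma Pc_tradeoff (K : channel R n) : 1 - p <= p <= 1 -> 0 <= alpha <= 1 - alpha ->
  is_channel K ->
  (A + B) * (Pc_thY n p alpha - Pc_thZ p alpha K) <= (A - B) * (1 - Pc_YZ p alpha K).
Proof.
move=> p_bnd alpha_bnd [K_ge0 K_sum1].
have /andP[p_compl_le p_le1] := p_bnd; have /andP[alpha_ge0 alpha_le_compl] := alpha_bnd.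
have P_ge0 t y : 0 <= P_thY t y by apply: P_thY_ge0; apply/andP; split; lra.
have marginal (F : word n -> R) : \sum_z \sum_y F y * K y z = \sum_y F y.
  by rewrite exchange_big; apply: eq_bigr => y _; rewrite -mulr_sumr K_sum1 mulr1.
rewrite -[Pc_thY _ _ _]marginal -[X in X - Pc_YZ _ _ _]sum_P_Y.
rewrite -[X in X - Pc_YZ _ _ _]marginal /Pc_thZ /Pc_YZ /P_thZ /P_YZ /P_Y.
rewrite -!sumrB !mulr_sumr; apply: ler_sum => z _.
apply: MAP_gap_weighted_le => [t y|t y||y] //; first exact: P_thY_bias.
by rewrite addr_ge0 ?mulr_ge0 ?exprn_ge0 //; lra.
Qed.

Lemma Pc_thZ_Zchan_le (g : R) : (0 < n)%N ->
  1 - p <= p <= 1 -> 0 <= alpha <= 1 - alpha -> 0 <= g -> g <= 1 -> g * (A - B) <= C - D ->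
  Pc_thZ p alpha (@Zchan R n g) <= Pc_thY n p alpha - g * (A - B).
Proof.
move=> n_gt0 /andP[p_compl_le p_le1] /andP[alpha_ge0 alpha_le_compl] g_ge0 g_le1 gAB.
have B_le_A : B <= A.
  by rewrite ler_pM ?exprn_ge0 ?lerXn2r ?nnegrE //; lra.
have others : \sum_(z | (z != ones n) && (z != zeros n))
                \big[Num.max/0]_(t : bool) P_thZ p alpha (@Zchan R n g) t z
            = \sum_(z | (z != ones n) && (z != zeros n))
                \big[Num.max/0]_(t : bool) P_thY t z.
  apply: eq_bigr => z /andP[z_ne1 z_ne0]; apply: eq_bigr => t _.
  by rewrite /P_thZ sum_Zchan // (negbTE z_ne1) (negbTE z_ne0).
have at_ones : \big[Num.max/0]_(t : bool) P_thZ p alpha (@Zchan R n g) t (ones n)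
               <= (1 - g) * A.
  apply: bigmax_le => [|t _]; first by rewrite mulr_ge0 ?mulr_ge0 ?exprn_ge0 //; lra.
  rewrite /P_thZ sum_Zchan // eqxx P_thY_ones ler_wpM2l ?subr_ge0 //.
  by case: t.
have at_zeros : \big[Num.max/0]_(t : bool) P_thZ p alpha (@Zchan R n g) t (zeros n)
                <= C + g * B.
  apply: bigmax_le => [|t _]; first by rewrite addr_ge0 ?mulr_ge0 ?exprn_ge0 //; lra.
  rewrite /P_thZ sum_Zchan // (negbTE (zeros_neq_ones n_gt0)) eqxx P_thY_ones P_thY_zeros.
  by case: t => /=; lra.
have MAP_ones : A <= \big[Num.max/0]_(t : bool) P_thY t (ones n).
  by have := le_bigmax 0 (P_thY^~ (ones n)) true; rewrite /= P_thY_ones.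
have MAP_zeros : C <= \big[Num.max/0]_(t : bool) P_thY t (zeros n).
  by have := le_bigmax 0 (P_thY^~ (zeros n)) false; rewrite /= P_thY_zeros.
rewrite /Pc_thZ /Pc_thY !(sum_ones_zeros n_gt0) others; lra.
Qed.

Lemma Pc_YZ_Zchan_ge (g : R) : (0 < n)%N ->
  1 - g * (A + B) <= Pc_YZ p alpha (@Zchan R n g).
Proof.
move=> n_gt0.
have P_Y_ones : P_Y (ones n) = A + B by rewrite /P_Y big_bool !P_thY_ones.
have Zchan_ones : @Zchan R n g (ones n) (ones n) = 1 - g.
  by rewrite /Zchan eqxx /= eq_sym (negbTE (zeros_neq_ones n_gt0)).
have diagonal : \sum_z P_YZ p alpha (@Zchan R n g) z z <= Pc_YZ p alpha (@Zchan R n g).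
  by apply: ler_sum => z _; apply: (le_bigmax 0 (fun y => P_YZ p alpha _ y z)).
apply: le_trans diagonal; rewrite /P_YZ (bigD1 (ones n)) //= Zchan_ones P_Y_ones.
rewrite (eq_bigr P_Y) => [|z z_ne1]; last by rewrite /Zchan z_ne1 eqxx mulr1.
by move: sum_P_Y; rewrite (bigD1 (ones n)) //= P_Y_ones; lra.
Qed.

Lemma Zchan_optimal (g : R) : (0 < n)%N -> 1 - p <= p <= 1 -> 0 <= alpha <= 1 - alpha ->
  B < A -> 0 <= g -> g * (A - B) <= C - D ->
  [/\ is_channel (@Zchan R n g),
      Pc_thZ p alpha (@Zchan R n g) <= Pc_thY n p alpha - g * (A - B),
      Pc_YZ p alpha (@Zchan R n g) = 1 - g * (A + B) &
      forall K : channel R n, is_channel K ->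
        Pc_thZ p alpha K <= Pc_thY n p alpha - g * (A - B) ->
        Pc_YZ p alpha K <= 1 - g * (A + B)].
Proof.
move=> n_gt0 p_bnd alpha_bnd B_lt_A g_ge0 gAB.
have /andP[p_compl_le p_le1] := p_bnd; have /andP[alpha_ge0 alpha_le_compl] := alpha_bnd.
have B_ge0 : 0 <= B by rewrite mulr_ge0 ?exprn_ge0 //; lra.
have AB_gt0 : 0 < A - B by rewrite subr_gt0.
have g_le1 : g <= 1.
  have CD_le_AB : C - D <= A - B.
    have Y_ge0 := exprn_ge0 n alpha_ge0.
    have X_ge0 : 0 <= (1 - alpha) ^+ n by rewrite exprn_ge0 //; lra.
    nra.
  by rewrite -(ler_pM2r AB_gt0) mul1r (le_trans gAB).
have converse (K : channel R n) : is_channel K ->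
    Pc_thZ p alpha K <= Pc_thY n p alpha - g * (A - B) -> Pc_YZ p alpha K <= 1 - g * (A + B).
  move=> K_ch K_le.
  suff : (A + B) * (g * (A - B)) <= (A - B) * (1 - Pc_YZ p alpha K).
    by rewrite mulrA mulrC ler_pM2l //; lra.
  apply: le_trans (Pc_tradeoff p_bnd alpha_bnd K_ch); rewrite ler_wpM2l //; lra.
have Zchan_ch := Zchan_is_channel n_gt0 g_ge0 g_le1.
have Zchan_thZ := Pc_thZ_Zchan_le n_gt0 p_bnd alpha_bnd g_ge0 g_le1 gAB.
split=> //; apply/le_anti; rewrite Pc_YZ_Zchan_ge // andbT; exact: converse.
Qed.

End BinaryObservations.

Theorem proposition3 (R : realType) (n : nat) (p alpha : R) :
  odd n ->
  2^-1 <= p -> p < 1 ->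
  0 < alpha -> alpha < 2^-1 ->
  alpha * p < (1 - alpha) * (1 - p) ->
  p < Pc_thY n p alpha ->
  let r := Pc_thY n p alpha `^ (n%:R)^-1 in
  exists epsL : R, epsL < r /\
    forall eps : R, epsL <= eps -> eps <= r ->
      let v := 1 - zeta n p alpha eps *
                   (p * (1 - alpha) ^+ n + (1 - p) * alpha ^+ n) in
      [/\ @is_channel R n (@Zchan R n (zeta n p alpha eps)),
          @Pc_thZ R n p alpha (@Zchan R n (zeta n p alpha eps)) <= eps ^+ n,
          @Pc_YZ R n p alpha (@Zchan R n (zeta n p alpha eps)) = v &
          forall K : channel R n, @is_channel R n K ->
            @Pc_thZ R n p alpha K <= eps ^+ n -> @Pc_YZ R n p alpha K <= v].
Proof.
move=> odd_n p_ge p_lt1 alpha_gt0 alpha_lt alpha_p_lt Pc_gt_p r.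
have n_gt0 := odd_gt0 odd_n.
have two_half : 2 * 2^-1 = 1 :> R by rewrite mulfV ?pnatr_eq0.
have p_bnd : 1 - p <= p <= 1 by apply/andP; split; lra.
have alpha_bnd : 0 <= alpha <= 1 - alpha by apply/andP; split; lra.
have B_lt_A : (1 - p) * alpha ^+ n < p * (1 - alpha) ^+ n.
  by apply: ltr_mul_exprn => //; nra.
have D_lt_C : p * alpha ^+ n < (1 - p) * (1 - alpha) ^+ n.
  by apply: ltr_mul_exprn => //; lra.
set Pc := Pc_thY n p alpha in Pc_gt_p r *.
pose d := Num.min ((1 - p) * (1 - alpha) ^+ n - p * alpha ^+ n) Pc.
have d_gt0 : 0 < d by rewrite lt_min subr_gt0 D_lt_C; lra.
have d_le_CD : d <= (1 - p) * (1 - alpha) ^+ n - p * alpha ^+ n by rewrite ge_min lexx.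
have d_le_Pc : d <= Pc by rewrite ge_min lexx orbT.
exists ((Pc - d) `^ n%:R^-1); split.
  by rewrite gt0_ltr_powR ?nnegrE ?invr_gt0 ?ltr0n //; lra.
move=> eps epsL_le eps_le_r v.
have eps_ge0 : 0 <= eps := le_trans (powR_ge0 _ _) epsL_le.
have eps_lo : Pc - d <= eps ^+ n by rewrite -powR_invn_le //; lra.
have eps_hi : eps ^+ n <= Pc by rewrite -powR_invn_ge //; lra.
have AB_neq0 : p * (1 - alpha) ^+ n - (1 - p) * alpha ^+ n != 0 by rewrite subr_eq0 gt_eqF.
have zeta_AB : zeta n p alpha eps * (p * (1 - alpha) ^+ n - (1 - p) * alpha ^+ n)
               = Pc - eps ^+ n by rewrite divfK.
have zeta_ge0 : 0 <= zeta n p alpha eps by rewrite divr_ge0 ?subr_ge0 // ltW ?subr_gt0.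
have := Zchan_optimal n_gt0 p_bnd alpha_bnd B_lt_A zeta_ge0.
by rewrite zeta_AB subKr; apply; lra.
Qed.
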